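(* Let $\delta_1,\delta_2>0$, $0<\lambda<\tfrac12$, $0<\alpha_1<1-2\lambda$ and $1-2\lambda<\alpha_2<1$, and consider the ODEs on $\mathbb{R}^3_+=\{(x_1,x_2,s):x_1,x_2,s>0\}$ $$\dot x_j=\delta_j\frac{s-\lambda}{s+\alpha_j}x_j\ (j=1,2),\qquad \dot s=s(1-s)-\frac{s}{s+\alpha_1}x_1-\frac{s}{s+\alpha_2}x_2.$$ These possess the line of equilibria $L=\{(x_1,x_2,\lambda)\in\mathbb{R}^3_+: \frac{x_1}{\lambda+\alpha_1}+\frac{x_2}{\lambda+\alpha_2}=1-\lambda\}$. Then the point $$X_H=\left(\frac{(\lambda+\alpha_1)^2(2\lambda+\alpha_2-1)}{\alpha_2-\alpha_1},\ \frac{(\lambda+\alpha_2)^2(1-2\lambda-\alpha_1)}{\alpha_2-\alpha_1},\ \lambda\right)\in L$$ is an elliptic Hopf point.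
   Context: A point $X_H$ on a line of equilibria $L$ of a smooth 3-dimensional ODE is a Hopf point if, after an affine linear change of coordinates $X=(y,z)\in\mathbb{R}^2\times\mathbb{R}$ placing $X_H$ at the origin and $L$ on $\{y=0\}$, the vector field $F=(f^y,f^z)$ satisfies $F(0,z)=0$ for all $z$, its Jacobian at the origin is $\begin{pmatrix}0&-\omega&0\\ \omega&0&0\\0&0&0\end{pmatrix}$ for some $\omega>0$, and $\partial_z(\partial_{y_1}f^{y_1}+\partial_{y_2}f^{y_2})(0,0)\neq0$. It is called elliptic if in addition $\Delta_yf^z(0,0)\neq0$ (with $\Delta_y=\partial_{y_1}^2+\partial_{y_2}^2$) and the discriminant $\xi=\mathrm{sign}\big(\partial_z(\partial_{y_1}f^{y_1}+\partial_{y_2}f^{y_2})(0,0)\cdot\Delta_yf^z(0,0)\big)$ equals $-1$ (hyperbolic if $\xi=1$). *)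

From Stdlib Require Import Reals.
From Coquelicot Require Import Coquelicot.
Open Scope R_scope.

Definition vec3 := (R * R * R)%type.

Definition vadd (u v : vec3) : vec3 :=
  let '(u1, u2, u3) := u in let '(v1, v2, v3) := v in (u1 + v1, u2 + v2, u3 + v3).
Definition vsub (u v : vec3) : vec3 :=
  let '(u1, u2, u3) := u in let '(v1, v2, v3) := v in (u1 - v1, u2 - v2, u3 - v3).

Record mat3 := Mat3 {
  a11 : R; a12 : R; a13 : R;
  a21 : R; a22 : R; a23 : R;
  a31 : R; a32 : R; a33 : R }.

Definition mv (A : mat3) (u : vec3) : vec3 :=
  let '(u1, u2, u3) := u in
  (a11 A * u1 + a12 A * u2 + a13 A * u3,
   a21 A * u1 + a22 A * u2 + a23 A * u3,
   a31 A * u1 + a32 A * u2 + a33 A * u3).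

Definition inverse_mats (A B : mat3) : Prop :=
  (forall v, mv B (mv A v) = v) /\ (forall v, mv A (mv B v) = v).

Definition transformed (F : vec3 -> vec3) (A B : mat3) (XH : vec3) (u : vec3) : vec3 :=
  mv B (F (vadd (mv A u) XH)).

Definition comp1 (v : vec3) : R := let '(a, _, _) := v in a.
Definition comp2 (v : vec3) : R := let '(_, b, _) := v in b.
Definition comp3 (v : vec3) : R := let '(_, _, c) := v in c.

Definition gcomp (G : vec3 -> vec3) (i : nat) (y1 y2 z : R) : R :=
  match i with
  | 1%nat => comp1 (G (y1, y2, z))
  | 2%nat => comp2 (G (y1, y2, z))
  | _ => comp3 (G (y1, y2, z))
  end.

Definition d_y1 (g : R -> R -> R -> R) (y1 y2 z : R) : R := Derive (fun t => g t y2 z) y1.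
Definition d_y2 (g : R -> R -> R -> R) (y1 y2 z : R) : R := Derive (fun t => g y1 t z) y2.
Definition d_z  (g : R -> R -> R -> R) (y1 y2 z : R) : R := Derive (fun t => g y1 y2 t) z.

Definition dz_div_y (G : vec3 -> vec3) : R :=
  d_z (fun y1 y2 z => d_y1 (gcomp G 1) y1 y2 z + d_y2 (gcomp G 2) y1 y2 z) 0 0 0.

Definition lap_y_gz (G : vec3 -> vec3) : R :=
  d_y1 (d_y1 (gcomp G 3)) 0 0 0 + d_y2 (d_y2 (gcomp G 3)) 0 0 0.

Definition hopf_conditions (G : vec3 -> vec3) : Prop :=
  (forall z, G (0, 0, z) = (0, 0, 0)) /\
  (exists omega : R, 0 < omega /\
     d_y1 (gcomp G 1) 0 0 0 = 0 /\ d_y2 (gcomp G 1) 0 0 0 = - omega /\ d_z (gcomp G 1) 0 0 0 = 0 /\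
     d_y1 (gcomp G 2) 0 0 0 = omega /\ d_y2 (gcomp G 2) 0 0 0 = 0 /\ d_z (gcomp G 2) 0 0 0 = 0 /\
     d_y1 (gcomp G 3) 0 0 0 = 0 /\ d_y2 (gcomp G 3) 0 0 0 = 0 /\ d_z (gcomp G 3) 0 0 0 = 0) /\
  dz_div_y G <> 0.

(* Affine change of coordinates X = A u + XH placing XH at the origin and
   the line of equilibria L on {y = 0}. *)
Definition admissible_change (L : vec3 -> Prop) (XH : vec3) (A B : mat3) : Prop :=
  inverse_mats A B /\
  (forall p, L p -> comp1 (mv B (vsub p XH)) = 0 /\ comp2 (mv B (vsub p XH)) = 0).

Definition hopf_point (F : vec3 -> vec3) (L : vec3 -> Prop) (XH : vec3) : Prop :=
  L XH /\
  exists A B : mat3, admissible_change L XH A B /\ hopf_conditions (transformed F A B XH).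

(* elliptic: discriminant xi = sign(dz_div_y * lap_y_gz) = -1 (and lap_y_gz <> 0) *)
Definition elliptic_hopf_point (F : vec3 -> vec3) (L : vec3 -> Prop) (XH : vec3) : Prop :=
  L XH /\
  exists A B : mat3, admissible_change L XH A B /\
    hopf_conditions (transformed F A B XH) /\
    lap_y_gz (transformed F A B XH) <> 0 /\
    dz_div_y (transformed F A B XH) * lap_y_gz (transformed F A B XH) < 0.

Definition chemostat_field (d1 d2 lam al1 al2 : R) (X : vec3) : vec3 :=
  let '(x1, x2, s) := X in
  (d1 * ((s - lam) / (s + al1)) * x1,
   d2 * ((s - lam) / (s + al2)) * x2,
   s * (1 - s) - s / (s + al1) * x1 - s / (s + al2) * x2).

Definition equilibria_line (lam al1 al2 : R) (X : vec3) : Prop :=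
  let '(x1, x2, s) := X in
  0 < x1 /\ 0 < x2 /\ 0 < s /\ s = lam /\ x1 / (lam + al1) + x2 / (lam + al2) = 1 - lam.

Definition hopf_candidate (lam al1 al2 : R) : vec3 :=
  ((lam + al1) ^ 2 * (2 * lam + al2 - 1) / (al2 - al1),
   (lam + al2) ^ 2 * (1 - 2 * lam - al1) / (al2 - al1),
   lam).

From Stdlib Require Import Reals Lra.
From Coquelicot Require Import Coquelicot.
Open Scope R_scope.

(* X_H is the point of L at which the s-derivative of the s-equation vanishes,
   so the Jacobian there has zero trace; its nonzero eigenvalues are then ±iω
   with ω² = λ (p1/(λ+α1) + p2/(λ+α2)), p_j = δ_j x_j/(λ+α_j) being the
   s-derivative of ẋ_j.  In the frame made of the vectors (p1, p2, 0), -ω e_s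
   and the direction of L, the linear part is the rotation by ω.  The
   transversality coefficient equals α2/(λ+α2) - α1/(λ+α1) > 0.  The
   z-component is a combination of the two ẋ_j-equations, which vanish
   identically where s = λ, so its y-Laplacian is a second derivative along
   the s-direction alone; it is negative because α1 < α2. *)

Ltac positivity :=
  repeat first [assumption | lra | apply Rplus_lt_0_compat | apply Rmult_lt_0_compat
               | apply Rdiv_lt_0_compat | apply Rinv_0_lt_compat].

Ltac nonzero := repeat split; apply Rgt_not_eq; unfold Rgt; solve [positivity].

Lemma Derive_Derive_halfline (f df : R -> R) (x b l : R) :
  x < b -> (forall t, t < b -> is_derive f t (df t)) -> is_derive df x l ->
  Derive (fun t => Derive f t) x = l.
Proof.
  intros hxb hf hdf.
  rewrite (Derive_ext_loc _ df); [now apply is_derive_unique |].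
  apply (locally_open (fun t => t < b)); [apply open_lt | | exact hxb].
  intros t ht; now apply is_derive_unique, hf.
Qed.

Section ChemostatHopf.

Variables d1 d2 lam al1 al2 : R.
Hypotheses (hd1 : 0 < d1) (hd2 : 0 < d2) (hlam0 : 0 < lam)
  (hal10 : 0 < al1) (hal11 : al1 < 1 - 2 * lam) (hal20 : 1 - 2 * lam < al2).

Let c1 := (lam + al1) ^ 2 * (2 * lam + al2 - 1) / (al2 - al1).
Let c2 := (lam + al2) ^ 2 * (1 - 2 * lam - al1) / (al2 - al1).
Let p1 := d1 * c1 / (lam + al1).
Let p2 := d2 * c2 / (lam + al2).
Let E := p1 * (lam + al2) + p2 * (lam + al1).
Let om2 := lam * (p1 / (lam + al1) + p2 / (lam + al2)).
Let om := sqrt om2.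

Definition hopf_frame : mat3 :=
  Mat3 p1 0 (lam + al1)
       p2 0 (- (lam + al2))
       0 (- om) 0.

Definition hopf_frame_inv : mat3 :=
  Mat3 ((lam + al2) / E) ((lam + al1) / E) 0
       0 0 (- 1 / om)
       (p2 / E) (- p1 / E) 0.

Let G := transformed (chemostat_field d1 d2 lam al1 al2) hopf_frame hopf_frame_inv
           (hopf_candidate lam al1 al2).

Let c1_pos : 0 < c1.
Proof. unfold c1; positivity; nra. Qed.

Let c2_pos : 0 < c2.
Proof. unfold c2; positivity; nra. Qed.

Let p1_pos : 0 < p1.
Proof. unfold p1; positivity. Qed.

Let p2_pos : 0 < p2.
Proof. unfold p2; positivity. Qed.

Let E_pos : 0 < E.
Proof. unfold E; positivity. Qed.

Let om2_pos : 0 < om2.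
Proof. unfold om2; positivity. Qed.

Let om_pos : 0 < om.
Proof. now apply sqrt_lt_R0. Qed.

Let om_sq : om * om = om2.
Proof. apply sqrt_sqrt; lra. Qed.

Let c_line : c1 / (lam + al1) + c2 / (lam + al2) = 1 - lam.
Proof. unfold c1, c2; field; lra. Qed.

Let c_trace :
  1 - 2 * lam - c1 * al1 / (lam + al1) ^ 2 - c2 * al2 / (lam + al2) ^ 2 = 0.
Proof. unfold c1, c2; field; lra. Qed.

Ltac unfold_transformed :=
  unfold G, gcomp, d_y1, d_y2, d_z;
  cbv beta iota zeta delta [transformed chemostat_field hopf_frame hopf_frame_inv
    hopf_candidate mv vadd comp1 comp2 comp3 a11 a12 a13 a21 a22 a23 a31 a32 a33];
  fold c1 c2.

Lemma hopf_candidate_on_line : equilibria_line lam al1 al2 (hopf_candidate lam al1 al2).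
Proof. repeat split; auto. Qed.

Lemma hopf_frame_inverse : inverse_mats hopf_frame hopf_frame_inv.
Proof.
  split; intros [[v1 v2] v3];
    cbv beta iota zeta delta [hopf_frame hopf_frame_inv mv
      a11 a12 a13 a21 a22 a23 a31 a32 a33].
  all: unfold E; f_equal; [f_equal |]; field; nonzero.
Qed.

Lemma hopf_frame_flattens_line p :
  equilibria_line lam al1 al2 p ->
  comp1 (mv hopf_frame_inv (vsub p (hopf_candidate lam al1 al2))) = 0 /\
  comp2 (mv hopf_frame_inv (vsub p (hopf_candidate lam al1 al2))) = 0.
Proof.
  destruct p as [[x1 x2] s]; intros (_ & _ & _ & -> & hx).
  cbv beta iota zeta delta [hopf_frame_inv hopf_candidate vsub mv comp1 comp2
    a11 a12 a13 a21 a22 a23]; fold c1 c2.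
  split; [| field; nonzero].
  transitivity ((lam + al1) * (lam + al2) / E *
                (x1 / (lam + al1) + x2 / (lam + al2) - (c1 / (lam + al1) + c2 / (lam + al2)))).
  - field; nonzero.
  - rewrite hx, c_line; ring.
Qed.

Lemma transformed_vanishes_on_axis z : G (0, 0, z) = (0, 0, 0).
Proof.
  unfold_transformed.
  f_equal; [f_equal |]; try solve [field; nonzero].
  transitivity (- lam / om * (1 - lam - (c1 / (lam + al1) + c2 / (lam + al2)))).
  - field; nonzero.
  - rewrite c_line; ring.
Qed.

Lemma transformed_jacobian_at_origin :
  d_y1 (gcomp G 1) 0 0 0 = 0 /\ d_y2 (gcomp G 1) 0 0 0 = - om /\ d_z (gcomp G 1) 0 0 0 = 0 /\
  d_y1 (gcomp G 2) 0 0 0 = om /\ d_y2 (gcomp G 2) 0 0 0 = 0 /\ d_z (gcomp G 2) 0 0 0 = 0 /\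
  d_y1 (gcomp G 3) 0 0 0 = 0 /\ d_y2 (gcomp G 3) 0 0 0 = 0 /\ d_z (gcomp G 3) 0 0 0 = 0.
Proof.
  repeat split; unfold_transformed; apply is_derive_unique; auto_derive;
    try solve [nonzero | field; nonzero].
  - unfold E, p1, p2; field; nonzero.
  - transitivity (om * om / om); [rewrite om_sq; unfold om2 |]; field; nonzero.
  - transitivity (1 - 2 * lam - c1 * al1 / (lam + al1) ^ 2 - c2 * al2 / (lam + al2) ^ 2).
    + field; nonzero.
    + exact c_trace.
  - unfold p1, p2; field; nonzero.
Qed.

Lemma transformed_dz_div_y_pos : 0 < dz_div_y G.
Proof.
  assert (hdiv : forall t, d_y1 (gcomp G 1) 0 0 t + d_y2 (gcomp G 2) 0 0 t
                           = t * (al2 / (lam + al2) - al1 / (lam + al1))).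
  { intro t.
    assert (h1 : d_y1 (gcomp G 1) 0 0 t = 0).
    { unfold_transformed; apply is_derive_unique; auto_derive; [nonzero | field; nonzero]. }
    assert (h2 : d_y2 (gcomp G 2) 0 0 t =
       (1 - 2 * lam - c1 * al1 / (lam + al1) ^ 2 - c2 * al2 / (lam + al2) ^ 2)
       + t * (al2 / (lam + al2) - al1 / (lam + al1))).
    { unfold_transformed; apply is_derive_unique; auto_derive; [nonzero | field; nonzero]. }
    rewrite h1, h2, c_trace; ring. }
  unfold dz_div_y, d_z.
  rewrite (Derive_ext _ _ 0 hdiv), (is_derive_unique _ _ (al2 / (lam + al2) - al1 / (lam + al1))).
  - replace (al2 / (lam + al2) - al1 / (lam + al1))
      with (lam * (al2 - al1) / ((lam + al1) * (lam + al2))) by (field; nonzero).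
    positivity.
  - auto_derive; [auto | ring].
Qed.

Lemma transformed_hopf_conditions : hopf_conditions G.
Proof.
  split; [exact transformed_vanishes_on_axis |]. split.
  - exists om; split; [exact om_pos | exact transformed_jacobian_at_origin].
  - apply Rgt_not_eq, transformed_dz_div_y_pos.
Qed.

Lemma transformed_lap_y_gz_neg : lap_y_gz G < 0.
Proof.
  assert (h11 : d_y1 (d_y1 (gcomp G 3)) 0 0 0 = 0).
  { unfold d_y1 at 1 2.
    apply (Derive_Derive_halfline (fun u => gcomp G 3 u 0 0) (fun _ => 0) 0 1);
      [lra | | auto_derive; auto].
    intros t _; unfold_transformed; auto_derive; [nonzero | field; nonzero]. }
  (* Along the y2-axis (the s-direction),
     G^z(0, t, 0) = K (-ωt) (1/(a2 (a1 - ωt)) - 1/(a1 (a2 - ωt)))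
     with a_j = λ + α_j and K = δ1 δ2 c1 c2 / E; it is singular at t = a1/ω. *)
  assert (h22 : d_y2 (d_y2 (gcomp G 3)) 0 0 0 =
     - (2 * (d1 * d2 * c1 * c2 / E) * (om * om) * (al2 - al1)
        / ((lam + al1) ^ 2 * (lam + al2) ^ 2))).
  { unfold d_y2 at 1 2.
    apply (Derive_Derive_halfline (fun u => gcomp G 3 0 u 0)
      (fun t => d1 * d2 * c1 * c2 / E * (- om) *
         ((lam + al1) / ((lam + al2) * (lam + al1 - om * t) ^ 2)
          - (lam + al2) / ((lam + al1) * (lam + al2 - om * t) ^ 2)))
      0 ((lam + al1) / om)).
    - positivity.
    - intros t ht; apply Rlt_div_r in ht; [| lra].
      unfold_transformed; auto_derive; [nonzero | unfold p1, p2; field; nonzero].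
    - auto_derive; [nonzero | field; nonzero]. }
  unfold lap_y_gz; rewrite h11, h22.
  assert (0 < 2 * (d1 * d2 * c1 * c2 / E) * (om * om) * (al2 - al1)
              / ((lam + al1) ^ 2 * (lam + al2) ^ 2)) by positivity.
  lra.
Qed.

Lemma transformed_elliptic_discriminant :
  lap_y_gz G <> 0 /\ dz_div_y G * lap_y_gz G < 0.
Proof.
  pose proof transformed_dz_div_y_pos.
  pose proof transformed_lap_y_gz_neg.
  split; [lra | nra].
Qed.

End ChemostatHopf.

Theorem lemma1 (d1 d2 lam al1 al2 : R)
  (hd1 : 0 < d1) (hd2 : 0 < d2) (hlam0 : 0 < lam) (hlam1 : lam < 1 / 2)
  (hal10 : 0 < al1) (hal11 : al1 < 1 - 2 * lam)
  (hal20 : 1 - 2 * lam < al2) (hal21 : al2 < 1) :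
  elliptic_hopf_point (chemostat_field d1 d2 lam al1 al2)
    (equilibria_line lam al1 al2) (hopf_candidate lam al1 al2).
Proof.
  split; [apply hopf_candidate_on_line; lra |].
  exists (hopf_frame d1 d2 lam al1 al2), (hopf_frame_inv d1 d2 lam al1 al2).
  split; [split |].
  - apply hopf_frame_inverse; lra.
  - intros p hp; apply hopf_frame_flattens_line; [lra .. | exact hp].
  - split; [apply transformed_hopf_conditions | apply transformed_elliptic_discriminant]; lra.
Qed.
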